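(* Let $W$ be a normal PO-dilator, $X$ a partial order, and $(Z,\iota,\kappa)$ a Kruskal fixed point of $W$ over $X$. The following are equivalent: (i) $\operatorname{rng}(\iota)\cup\operatorname{rng}(\kappa)=Z$; for all $x,y\in X$, $x\leq_X y$ implies $\iota(x)\leq_Z\iota(y)$; and there is a function $h:Z\to\mathbb N$ such that $s\in\operatorname{supp}^W_Z(\sigma)$ implies $h(s)<h(\kappa(\sigma))$ for all $s\in Z$ and $\sigma\in W(Z)$. (ii) The Kruskal fixed point $(Z,\iota,\kappa)$ is initial.
   Context: A quasi embedding between partial orders $X,Y$ is a function $f$ with $f(x)\leq_Y f(y)\Rightarrow x\leq_X y$; an embedding also satisfies the converse. $\mathrm{PO}$ is the category of partial orders and quasi embeddings. $[X]^{<\omega}$ denotes the finite subsets of $X$, with $[f]^{<\omega}(a)=\{f(x)\mid x\in a\}$. A PO-dilator is a functor $W:\mathrm{PO}\to\mathrm{PO}$ mapping embeddings to embeddings, with a natural transformation $\operatorname{supp}^W:W\Rightarrow[\cdot]^{<\omega}$ such that for every embedding $f:X\to Y$, $\operatorname{rng}(W(f))=\{\sigma\in W(Y)\mid\operatorname{supp}^W_Y(\sigma)\subseteq\operatorname{rng}(f)\}$. For finite $a,b\subseteq X$, $a\leq^{\mathrm{fin}}_X b$ iff every $x\in a$ has some $y\in b$ with $x\leq_X y$ (for an element $z$, $z\leq^{\mathrm{fin}}_X b$ means $\{z\}\leq^{\mathrm{fin}}_X b$). $W$ is normal if $\sigma\leq_{W(X)}\tau$ implies $\operatorname{supp}^W_X(\sigma)\leq^{\mathrm{fin}}_X\operatorname{supp}^W_X(\tau)$.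 A Kruskal fixed point of a normal PO-dilator $W$ over a partial order $X$ is a partial order $Z$ with functions $\iota:X\to Z$ and $\kappa:W(Z)\to Z$ such that $\operatorname{rng}(\iota)\cap\operatorname{rng}(\kappa)=\emptyset$ and: $\iota(x)\leq_Z\iota(y)$ implies $x\leq_X y$; $\iota(x)\leq_Z\kappa(\tau)$ iff $\iota(x)\leq^{\mathrm{fin}}_Z\operatorname{supp}^W_Z(\tau)$; $\kappa(\sigma)\not\leq_Z\iota(y)$ for all $\sigma,y$; and $\kappa(\sigma)\leq_Z\kappa(\tau)$ iff ($\sigma\leq_{W(Z)}\tau$ or $\kappa(\sigma)\leq^{\mathrm{fin}}_Z\operatorname{supp}^W_Z(\tau)$), for all $x,y\in X$, $\sigma,\tau\in W(Z)$. Such a Kruskal fixed point $(Z,\iota,\kappa)$ is initial if for every Kruskal fixed point $(Z',\iota',\kappa')$ of $W$ over $X$ there is a unique quasi embedding $f:Z\to Z'$ with $f\circ\iota=\iota'$ and $f\circ\kappa=\kappa'\circ W(f)$. *)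

From Stdlib Require Import List Arith.
Import ListNotations.

Set Implicit Arguments.
Unset Strict Implicit.

Record PO : Type := MkPO {
  car :> Type;
  le : car -> car -> Prop;
  le_refl : forall x, le x x;
  le_antisym : forall x y, le x y -> le y x -> x = y;
  le_trans : forall x y z, le x y -> le y z -> le x z
}.
Arguments le {p} _ _.

Definition quasi_emb (X Y : PO) (f : X -> Y) : Prop :=
  forall x y : X, le (f x) (f y) -> le x y.

Definition embedding (X Y : PO) (f : X -> Y) : Prop :=
  forall x y : X, le (f x) (f y) <-> le x y.

(** Finite subsets are represented by lists (membership via [In]).
    a <=^fin b : every element of a lies below some element of b. *)
Definition fin_le (X : PO) (a b : list X) : Prop :=
  forall x, In x a -> exists y, In y b /\ le x y.

(** PO-dilators: endofunctors of the category PO of partial orders and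
    quasi embeddings that preserve embeddings, with a natural support
    transformation W => [.]^{<omega} satisfying the support condition. *)
Record PO_dilator : Type := MkDil {
  W_obj :> PO -> PO;
  W_map : forall (X Y : PO) (f : X -> Y), quasi_emb f -> W_obj X -> W_obj Y;
  W_map_qe : forall (X Y : PO) (f : X -> Y) (hf : quasi_emb f),
      quasi_emb (W_map hf);
  W_map_id : forall (X : PO) (h : quasi_emb (fun x : X => x)) (s : W_obj X),
      W_map h s = s;
  W_map_comp : forall (X Y Z : PO) (f : X -> Y) (g : Y -> Z)
      (hf : quasi_emb f) (hg : quasi_emb g)
      (hgf : quasi_emb (fun x => g (f x))) (s : W_obj X),
      W_map hgf s = W_map hg (W_map hf s);
  W_map_emb : forall (X Y : PO) (f : X -> Y) (hf : quasi_emb f),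
      embedding f -> embedding (W_map hf);
  supp : forall X : PO, W_obj X -> list X;
  supp_nat : forall (X Y : PO) (f : X -> Y) (hf : quasi_emb f) (s : W_obj X) (y : Y),
      In y (supp (W_map hf s)) <-> exists x, In x (supp s) /\ f x = y;
  supp_rng : forall (X Y : PO) (f : X -> Y) (hf : quasi_emb f), embedding f ->
      forall t : W_obj Y,
        (exists s, W_map hf s = t) <->
        (forall y, In y (supp t) -> exists x, f x = y)
}.
Arguments W_map {p X Y f} _ _.
Arguments supp {p X} _.

Definition normal (W : PO_dilator) : Prop :=
  forall (X : PO) (s t : W X), le s t -> fin_le (supp s) (supp t).

Definition is_KFP (W : PO_dilator) (X Z : PO) (iota : X -> Z) (kappa : W Z -> Z)
  : Prop :=
  (forall x s, iota x <> kappa s) /\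
  (forall x y, le (iota x) (iota y) -> le x y) /\
  (forall x t, le (iota x) (kappa t) <-> fin_le [iota x] (supp t)) /\
  (forall s y, ~ le (kappa s) (iota y)) /\
  (forall s t, le (kappa s) (kappa t) <->
               (le s t \/ fin_le [kappa s] (supp t))).
Arguments is_KFP : clear implicits.

(** Initiality: unique quasi embedding into any other Kruskal fixed point,
    commuting with iota and kappa (equality of functions = pointwise). *)
Definition is_initial_KFP (W : PO_dilator) (X Z : PO) (iota : X -> Z)
  (kappa : W Z -> Z) : Prop :=
  forall (Z' : PO) (iota' : X -> Z') (kappa' : W Z' -> Z'),
    is_KFP W X Z' iota' kappa' ->
    exists (f : Z -> Z') (hf : quasi_emb f),
      (forall x, f (iota x) = iota' x) /\
      (forall s, f (kappa s) = kappa' (W_map hf s)) /\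
      (forall (g : Z -> Z') (hg : quasi_emb g),
          (forall x, g (iota x) = iota' x) ->
          (forall s, g (kappa s) = kappa' (W_map hg s)) ->
          forall z, g z = f z).
Arguments is_initial_KFP : clear implicits.

(* (i) => (ii): every element is [iota x] or [kappa s], and the elements of [supp s] have
   smaller height, so a morphism [f] into another Kruskal fixed point is forced by
   [f (iota x) = iota' x] and [f (kappa s) = kappa' (W f s)].  It is built by recursion on
   the height, as compatible quasi embeddings on the sub-orders [{z | h z < n}]; the
   quasi-embedding property is proved by induction on the sum of the heights, monotonicity
   of [iota] handling the comparison of [iota x] with [iota y].  Uniqueness holds because
   [W f s] only depends on [f] on [supp s].

   (ii) => (i): the elements generated from [iota] and [kappa] in finitely many steps form a
   Kruskal fixed point; composing the initial morphism into it with the inclusion gives an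
   endomorphism of [Z], hence the identity, so everything is generated.  By normality no
   [kappa s] lies in [supp s], so [kappa] is injective and the least generation stage is a
   height.  For monotonicity of [iota] it suffices to exhibit one Kruskal fixed point with
   monotone [iota'], since the initial quasi embedding pulls [iota' x <= iota' y] back.  It
   is obtained as a union of stages on elements of [Z]: stage [n+1] consists of the [iota x]
   and the [kappa s] with [s] in [W] of stage [n], ordered by the clauses of a Kruskal fixed
   point together with [x <= y -> iota x <= iota y].  Inductively, every stage order extends
   the previous one and contains the order of [Z]; the latter makes the inclusion of a stage
   into [Z] a quasi embedding, so that [kappa] itself serves for every stage. *)

From Stdlib Require Import List Arith Lia Wf_nat.
From Stdlib Require Import Classical ClassicalEpsilon FunctionalExtensionality ProofIrrelevance.
Import ListNotations.

Set Implicit Arguments.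
Unset Strict Implicit.

Lemma quasi_emb_inj (A B : PO) (f : A -> B) :
  quasi_emb f -> forall a b, f a = f b -> a = b.
Proof. intros hf a b e. apply le_antisym; apply hf; rewrite e; apply le_refl. Qed.

Lemma embedding_quasi_emb (A B : PO) (f : A -> B) : embedding f -> quasi_emb f.
Proof. intros ef a b; apply ef. Qed.

Lemma fin_le_single (A : PO) (a : A) (l : list A) :
  fin_le [a] l <-> exists b, In b l /\ le a b.
Proof.
  split.
  - intros H. apply H. left; reflexivity.
  - intros [b [hb hab]] x [<-|[]]. exists b; auto.
Qed.

Lemma monotone_family_bound (A : Type) (P : nat -> A -> Prop) :
  (forall n m a, n <= m -> P n a -> P m a) ->
  forall l : list A, (forall a, In a l -> exists n, P n a) -> exists n, forall a, In a l -> P n a.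
Proof.
  intros mono l. induction l as [|a l IH]; intros H; [exists 0; intros b []|].
  destruct (H a (or_introl eq_refl)) as [na Ha].
  destruct IH as [N HN]; [intros b hb; apply H; right; exact hb|].
  exists (max na N). intros b [<-|hb].
  - apply (mono na); [lia|exact Ha].
  - apply (mono N); [lia|auto].
Qed.

Definition sub_po (A : PO) (P : A -> Prop) : PO.
Proof.
  refine (@MkPO (sig P) (fun a b => le (proj1_sig a) (proj1_sig b)) _ _ _).
  - intros; apply le_refl.
  - intros [a pa] [b pb] hab hba; cbn in *.
    assert (a = b) by (apply le_antisym; auto). subst.
    f_equal; apply proof_irrelevance.
  - intros a b c hab hbc; eapply le_trans; eauto.
Defined.
Arguments sub_po {A} P.

Definition sub_val (A : PO) (P : A -> Prop) (a : sub_po P) : A := proj1_sig a.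

Lemma sub_val_emb (A : PO) (P : A -> Prop) : embedding (@sub_val A P).
Proof. intros a b; split; auto. Qed.

Definition sub_val_qe (A : PO) (P : A -> Prop) : quasi_emb (@sub_val A P) :=
  embedding_quasi_emb (@sub_val_emb A P).
Arguments sub_val_emb {A} P.
Arguments sub_val_qe {A} P.

Section DilatorFacts.
Variable W : PO_dilator.

Lemma W_map_ext (A B : PO) (f g : A -> B) (hf : quasi_emb f) (hg : quasi_emb g) :
  (forall a, f a = g a) -> forall s : W A, W_map hf s = W_map hg s.
Proof.
  intros e. assert (f = g) by (apply functional_extensionality; auto). subst g.
  rewrite (proof_irrelevance _ hf hg). reflexivity.
Qed.

Lemma W_map_compose (A B C : PO) (f : A -> B) (g : B -> C) (k : A -> C)
  (hf : quasi_emb f) (hg : quasi_emb g) (hk : quasi_emb k) :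
  (forall a, k a = g (f a)) -> forall s : W A, W_map hk s = W_map hg (W_map hf s).
Proof.
  intros e s. assert (hgf : quasi_emb (fun a => g (f a))) by (intros a b H; apply hf, hg, H).
  rewrite <- (W_map_comp hf hg hgf). apply W_map_ext; auto.
Qed.

Lemma W_map_inj (A B : PO) (f : A -> B) (hf : quasi_emb f) (s t : W A) :
  W_map hf s = W_map hf t -> s = t.
Proof. apply quasi_emb_inj, W_map_qe. Qed.

Lemma in_supp_W_map (A B : PO) (f : A -> B) (hf : quasi_emb f) (s : W A) (a : A) :
  In a (supp s) -> In (f a) (supp (W_map hf s)).
Proof. intros H. apply supp_nat. eauto. Qed.

Lemma W_sub_po_preimage (A : PO) (P : A -> Prop) (t : W A) :
  (forall a, In a (supp t) -> P a) -> exists s : W (sub_po P), W_map (sub_val_qe P) s = t.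
Proof.
  intros H. apply (supp_rng (sub_val_qe P) (sub_val_emb P)).
  intros a ha. exists (exist _ a (H a ha)). reflexivity.
Qed.

(* By the support condition, [s] comes from the sub-order spanned by its support. *)
Lemma W_map_supp_ext (A B : PO) (f g : A -> B) (hf : quasi_emb f) (hg : quasi_emb g)
  (s : W A) : (forall a, In a (supp s) -> f a = g a) -> W_map hf s = W_map hg s.
Proof.
  intros e.
  set (P := fun a => In a (supp s)).
  destruct (@W_sub_po_preimage A P s (fun a ha => ha)) as [s0 Hs0].
  rewrite <- Hs0.
  assert (hfP : quasi_emb (fun a : sub_po P => f (sub_val a))) by (intros a b H; apply hf, H).
  assert (hgP : quasi_emb (fun a : sub_po P => g (sub_val a))) by (intros a b H; apply hg, H).
  rewrite <- (W_map_compose (sub_val_qe P) hf hfP (fun _ => eq_refl)).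
  rewrite <- (W_map_compose (sub_val_qe P) hg hgP (fun _ => eq_refl)).
  apply W_map_ext. intros [a pa]. apply e, pa.
Qed.

Lemma fin_le_single_W_map (A B : PO) (f : A -> B) (hf : quasi_emb f) (ef : embedding f)
  (a : A) (t : W A) : fin_le [f a] (supp (W_map hf t)) <-> fin_le [a] (supp t).
Proof.
  rewrite !fin_le_single. split.
  - intros [b [hb hab]]. apply supp_nat in hb. destruct hb as [c [hc <-]].
    exists c; split; [exact hc | apply ef, hab].
  - intros [b [hb hab]]. exists (f b); split; [apply in_supp_W_map, hb | apply ef, hab].
Qed.

End DilatorFacts.

Section KruskalFixedPoints.
Variables (W : PO_dilator) (X Z : PO) (iota : X -> Z) (kappa : W Z -> Z).
Hypothesis HK : is_KFP W X Z iota kappa.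

Lemma kfp_iota_neq_kappa x s : iota x <> kappa s.
Proof. apply HK. Qed.

Lemma kfp_iota_le_iota x y : le (iota x) (iota y) -> le x y.
Proof. apply HK. Qed.

Lemma kfp_iota_le_kappa x t : le (iota x) (kappa t) <-> fin_le [iota x] (supp t).
Proof. apply HK. Qed.

Lemma kfp_kappa_nle_iota s y : ~ le (kappa s) (iota y).
Proof. apply HK. Qed.

Lemma kfp_kappa_le_kappa s t :
  le (kappa s) (kappa t) <-> le s t \/ fin_le [kappa s] (supp t).
Proof. apply HK. Qed.

Lemma kfp_iota_inj x y : iota x = iota y -> x = y.
Proof.
  intros e. apply le_antisym; apply kfp_iota_le_iota; rewrite e; apply le_refl.
Qed.

Section Surjective.
Hypothesis surj : forall z : Z, (exists x, iota x = z) \/ (exists s, kappa s = z).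

Lemma kfp_supp_le_kappa z t : In z (supp t) -> le z (kappa t).
Proof.
  intros hz. destruct (surj z) as [[x <-]|[s <-]].
  - apply kfp_iota_le_kappa, fin_le_single. exists (iota x); split; auto using le_refl.
  - apply kfp_kappa_le_kappa. right. apply fin_le_single.
    exists (kappa s); split; auto using le_refl.
Qed.

Lemma kfp_kappa_inj :
  (forall s, ~ In (kappa s) (supp s)) -> forall s t, kappa s = kappa t -> s = t.
Proof.
  intros irr.
  assert (H : forall s t, kappa s = kappa t -> le s t).
  { intros s t e.
    assert (hst : le (kappa s) (kappa t)) by (rewrite e; apply le_refl).
    apply kfp_kappa_le_kappa in hst as [hst|hst]; [exact hst|].
    apply fin_le_single in hst as [u [hu hsu]].
    assert (u = kappa t).
    { apply le_antisym; [apply kfp_supp_le_kappa, hu | rewrite <- e; exact hsu]. }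
    subst u. destruct (irr t hu). }
  intros s t e. apply le_antisym; auto.
Qed.

End Surjective.

Lemma initial_endo_id : is_initial_KFP W X Z iota kappa ->
  forall (g : Z -> Z) (hg : quasi_emb g),
    (forall x, g (iota x) = iota x) ->
    (forall s, g (kappa s) = kappa (W_map hg s)) -> forall z, g z = z.
Proof.
  intros HI g hg Hi Hk z.
  destruct (HI Z iota kappa HK) as [f [hf [_ [_ U]]]].
  assert (hid : quasi_emb (fun z : Z => z)) by (intros a b H; exact H).
  rewrite (U g hg Hi Hk z). symmetry.
  apply (U (fun z => z) hid); [reflexivity|].
  intros s. f_equal. symmetry. apply W_map_id.
Qed.

Lemma initial_iota_mono (Z' : PO) (iota' : X -> Z') (kappa' : W Z' -> Z') :
  is_initial_KFP W X Z iota kappa -> is_KFP W X Z' iota' kappa' ->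
  (forall x y, le x y -> le (iota' x) (iota' y)) ->
  forall x y, le x y -> le (iota x) (iota y).
Proof.
  intros HI HK' mono' x y hxy.
  destruct (HI Z' iota' kappa' HK') as [f [hf [Hi _]]].
  apply hf. rewrite !Hi. apply mono', hxy.
Qed.

End KruskalFixedPoints.

(** * Initiality from a height function *)

Section InitialFromHeight.
Variables (W : PO_dilator) (X Z : PO) (iota : X -> Z) (kappa : W Z -> Z).
Hypothesis HK : is_KFP W X Z iota kappa.
Hypothesis surj : forall z : Z, (exists x, iota x = z) \/ (exists s, kappa s = z).
Hypothesis mono : forall x y : X, le x y -> le (iota x) (iota y).
Variable h : Z -> nat.
Hypothesis h_supp : forall (z : Z) (s : W Z), In z (supp s) -> h z < h (kappa s).

Lemma height_kappa_inj : forall s t, kappa s = kappa t -> s = t.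
Proof.
  apply (kfp_kappa_inj HK surj). intros s hs. pose proof (h_supp hs). lia.
Qed.

Definition below (n : nat) (z : Z) : Prop := h z < n.

Lemma below_preimage n s : h (kappa s) <= n ->
  exists s' : W (sub_po (below n)), W_map (sub_val_qe (below n)) s' = s.
Proof.
  intros hs. apply W_sub_po_preimage. intros z hz. pose proof (h_supp hz). unfold below. lia.
Qed.

Lemma in_supp_below n (a : sub_po (below n)) s' s :
  W_map (sub_val_qe (below n)) s' = s -> In a (supp s') -> h (sub_val a) < h (kappa s).
Proof. intros <- ha. apply h_supp, in_supp_W_map, ha. Qed.

Definition below_incl n m (hnm : n <= m) (a : sub_po (below n)) : sub_po (below m) :=
  exist (below m) (sub_val a) (Nat.lt_le_trans _ _ _ (proj2_sig a) hnm).

Lemma below_incl_qe n m (hnm : n <= m) : quasi_emb (below_incl hnm).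
Proof. intros a b H; exact H. Qed.
Arguments below_incl_qe {n m} hnm.

Lemma W_map_below_incl n m (hnm : n <= m) (s' : W (sub_po (below n))) :
  W_map (sub_val_qe (below m)) (W_map (below_incl_qe hnm) s') = W_map (sub_val_qe (below n)) s'.
Proof. symmetry. apply W_map_compose. reflexivity. Qed.

Section Target.
Variables (Z' : PO) (iota' : X -> Z') (kappa' : W Z' -> Z').
Hypothesis HK' : is_KFP W X Z' iota' kappa'.

Record approx_morph n (g : sub_po (below n) -> Z') (hg : quasi_emb g) : Prop := {
  approx_iota : forall x (p : below n (iota x)), g (exist _ (iota x) p) = iota' x;
  approx_kappa : forall s (p : below n (kappa s)) (s' : W (sub_po (below n))),
    W_map (sub_val_qe (below n)) s' = s -> g (exist _ (kappa s) p) = kappa' (W_map hg s')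
}.

Lemma approx_morph_unique n (g1 g2 : sub_po (below n) -> Z')
  (hg1 : quasi_emb g1) (hg2 : quasi_emb g2) :
  approx_morph hg1 -> approx_morph hg2 -> forall a, g1 a = g2 a.
Proof.
  intros [I1 K1] [I2 K2].
  enough (H : forall k (a : sub_po (below n)), h (sub_val a) < k -> g1 a = g2 a)
    by (intros a; eauto).
  induction k as [|k IH]; intros [z pz] hk; cbn in hk; [lia|].
  destruct (surj z) as [[x <-]|[s <-]]; [rewrite I1, I2; reflexivity|].
  destruct (below_preimage (Nat.lt_le_incl _ _ pz)) as [s' hs'].
  rewrite (K1 s pz s' hs'), (K2 s pz s' hs'). f_equal.
  apply W_map_supp_ext. intros a ha. apply IH.
  specialize (in_supp_below hs' ha). lia.
Qed.

Lemma approx_morph_restrict n m (hnm : n <= m) (g : sub_po (below m) -> Z') (hg : quasi_emb g)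
  (hgr : quasi_emb (fun a => g (below_incl hnm a))) :
  approx_morph hg -> approx_morph hgr.
Proof.
  intros [Ig Kg]. split.
  - intros x p. apply Ig.
  - intros s p s' hs'. unfold below_incl, sub_val; cbn.
    rewrite (Kg s _ (W_map (below_incl_qe hnm) s')) by (rewrite W_map_below_incl; exact hs').
    f_equal. symmetry. apply W_map_compose. reflexivity.
Qed.

Section Extension.
Variables (n : nat) (g : sub_po (below n) -> Z') (hg : quasi_emb g).
Hypothesis Hg : approx_morph hg.

Lemma extension_value_exists z (p : below (S n) z) : exists y : Z',
  (forall x, z = iota x -> y = iota' x) /\
  (forall s s', z = kappa s -> W_map (sub_val_qe (below n)) s' = s -> y = kappa' (W_map hg s')).
Proof.
  destruct (surj z) as [[x <-]|[s <-]].
  - exists (iota' x); split.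
    + intros x' e. apply (kfp_iota_inj HK) in e. subst; reflexivity.
    + intros s s' e. destruct (kfp_iota_neq_kappa HK e).
  - destruct (below_preimage (le_S_n _ _ p)) as [s0 hs0].
    exists (kappa' (W_map hg s0)); split.
    + intros x e. destruct (kfp_iota_neq_kappa HK (eq_sym e)).
    + intros s1 s' e hs'. apply height_kappa_inj in e. subst s1.
      rewrite <- hs' in hs0. apply W_map_inj in hs0. subst; reflexivity.
Qed.

Definition extension_at z (p : below (S n) z) : Z' :=
  proj1_sig (constructive_indefinite_description _ (extension_value_exists p)).

Definition extension (a : sub_po (below (S n))) : Z' := extension_at (proj2_sig a).

Lemma extension_at_iota x (p : below (S n) (iota x)) : extension_at p = iota' x.
Proof.
  exact (proj1 (proj2_sig (constructive_indefinite_description _ (extension_value_exists p)))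
           x eq_refl).
Qed.

Lemma extension_at_kappa s (p : below (S n) (kappa s)) s' :
  W_map (sub_val_qe (below n)) s' = s -> extension_at p = kappa' (W_map hg s').
Proof.
  exact (proj2 (proj2_sig (constructive_indefinite_description _ (extension_value_exists p)))
           s s' eq_refl).
Qed.

Definition succ_incl : sub_po (below n) -> sub_po (below (S n)) :=
  below_incl (Nat.le_succ_diag_r n).

Lemma extension_succ_incl a : extension (succ_incl a) = g a.
Proof.
  destruct a as [z pz]. unfold extension; cbn.
  destruct (surj z) as [[x <-]|[s <-]].
  - rewrite extension_at_iota. symmetry; apply (approx_iota Hg).
  - destruct (below_preimage (Nat.lt_le_incl _ _ pz)) as [s' hs'].
    rewrite (extension_at_kappa _ hs'). symmetry; apply (approx_kappa Hg _ hs').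
Qed.

Lemma fin_le_extension_supp z (p : below (S n) z) t (t' : W (sub_po (below n))) :
  W_map (sub_val_qe (below n)) t' = t ->
  (forall a, In a (supp t') -> le (extension_at p) (g a) -> le z (sub_val a)) ->
  fin_le [extension_at p] (supp (W_map hg t')) -> fin_le [z] (supp t).
Proof.
  intros ht' IH. rewrite !fin_le_single. intros [y [hy hle]].
  apply supp_nat in hy as [a [ha <-]].
  exists (sub_val a); split; [rewrite <- ht'; apply in_supp_W_map, ha | apply IH; auto].
Qed.

Lemma extension_qe : quasi_emb extension.
Proof.
  assert (H : forall k za zb (pa : below (S n) za) (pb : below (S n) zb),
            h za + h zb < k -> le (extension_at pa) (extension_at pb) -> le za zb).
  2: { intros [za pa] [zb pb] hle. exact (H _ za zb pa pb (Nat.lt_succ_diag_r _) hle). }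
  induction k as [|k IH]; intros za zb pa pb hk hle; [lia|].
  assert (IHsupp : forall t t', W_map (sub_val_qe (below n)) t' = t -> zb = kappa t ->
            forall a, In a (supp t') -> le (extension_at pa) (g a) -> le za (sub_val a)).
  { intros t t' ht' -> a ha. rewrite <- extension_succ_incl.
    apply IH. pose proof (in_supp_below ht' ha). lia. }
  destruct (surj zb) as [[y <-]|[t <-]].
  - destruct (surj za) as [[x <-]|[s <-]].
    + rewrite !extension_at_iota in hle. apply mono, (kfp_iota_le_iota HK' hle).
    + destruct (below_preimage (le_S_n _ _ pa)) as [s' hs'].
      rewrite extension_at_iota, (extension_at_kappa _ hs') in hle.
      destruct (kfp_kappa_nle_iota HK' hle).
  - destruct (below_preimage (le_S_n _ _ pb)) as [t' ht'].
    pose proof hle as hle'. rewrite (extension_at_kappa pb ht') in hle'.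
    assert (Hsupp : fin_le [extension_at pa] (supp (W_map hg t')) -> fin_le [za] (supp t))
      by exact (fin_le_extension_supp ht' (IHsupp _ _ ht' eq_refl)).
    destruct (surj za) as [[x <-]|[s <-]].
    + apply (kfp_iota_le_kappa HK), Hsupp.
      rewrite (extension_at_iota pa) in *. apply (kfp_iota_le_kappa HK' x), hle'.
    + destruct (below_preimage (le_S_n _ _ pa)) as [s' hs'].
      apply (kfp_kappa_le_kappa HK).
      rewrite (extension_at_kappa pa hs') in Hsupp, hle'.
      apply (kfp_kappa_le_kappa HK') in hle' as [hle'|hle']; [left|right; auto].
      apply W_map_qe in hle'. rewrite <- hs', <- ht'.
      apply (W_map_emb (sub_val_qe _) (sub_val_emb _)), hle'.
Qed.

Lemma extension_morph : approx_morph extension_qe.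
Proof.
  split.
  - intros x p. apply extension_at_iota.
  - intros s p s1 hs1. unfold extension; cbn.
    destruct (below_preimage (le_S_n _ _ p)) as [s0 hs0].
    rewrite (extension_at_kappa _ hs0). f_equal.
    assert (e : s1 = W_map (below_incl_qe (Nat.le_succ_diag_r n)) s0).
    { apply W_map_inj with (hf := sub_val_qe (below (S n))).
      rewrite hs1, W_map_below_incl, hs0. reflexivity. }
    subst s1. apply W_map_compose. intros a. symmetry. apply extension_succ_incl.
Qed.

End Extension.

Lemma approx_morph_exists n :
  exists (g : sub_po (below n) -> Z') (hg : quasi_emb g), approx_morph hg.
Proof.
  induction n as [|n [g [hg Hg]]].
  - assert (g0 : sub_po (below 0) -> Z') by (intros [z pz]; exfalso; unfold below in pz; lia).
    assert (hg0 : quasi_emb g0) by (intros [z pz]; unfold below in pz; lia).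
    exists g0, hg0. split; intros; unfold below in *; lia.
  - exists (extension hg), (extension_qe Hg). apply extension_morph.
Qed.

Definition approx_at n : sub_po (below n) -> Z' :=
  proj1_sig (constructive_indefinite_description _ (approx_morph_exists n)).
Arguments approx_at : clear implicits.

Lemma approx_at_morph n : exists hg : quasi_emb (approx_at n), approx_morph hg.
Proof. exact (proj2_sig (constructive_indefinite_description _ (approx_morph_exists n))). Qed.

Definition initial_map (z : Z) : Z' :=
  approx_at (S (h z)) (exist (below (S (h z))) z (Nat.lt_succ_diag_r (h z))).

Lemma initial_map_approx_at n (a : sub_po (below n)) : initial_map (sub_val a) = approx_at n a.
Proof.
  destruct a as [z pz]. unfold initial_map, sub_val; cbn.
  assert (hk : S (h z) <= n) by exact pz.
  destruct (approx_at_morph (S (h z))) as [h1 H1], (approx_at_morph n) as [h2 H2].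
  assert (hr : quasi_emb (fun a => approx_at n (below_incl hk a)))
    by (intros a b H; exact (h2 _ _ H)).
  rewrite (approx_morph_unique H1 (approx_morph_restrict hr H2)).
  unfold below_incl, sub_val; cbn. f_equal. f_equal. apply proof_irrelevance.
Qed.

Lemma initial_map_qe : quasi_emb initial_map.
Proof.
  intros a b H.
  set (n := S (max (h a) (h b))).
  assert (pa : below n a) by (unfold below, n; lia).
  assert (pb : below n b) by (unfold below, n; lia).
  change (le (initial_map (sub_val (exist (below n) a pa)))
             (initial_map (sub_val (exist (below n) b pb)))) in H.
  rewrite !initial_map_approx_at in H. destruct (approx_at_morph n) as [hn _]. exact (hn _ _ H).
Qed.

Lemma initial_map_iota x : initial_map (iota x) = iota' x.
Proof. destruct (approx_at_morph (S (h (iota x)))) as [hg Hg]. apply (approx_iota Hg). Qed.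

Lemma initial_map_kappa s : initial_map (kappa s) = kappa' (W_map initial_map_qe s).
Proof.
  destruct (below_preimage (Nat.le_succ_diag_r (h (kappa s)))) as [s' hs'].
  destruct (approx_at_morph (S (h (kappa s)))) as [hg Hg].
  unfold initial_map at 1. rewrite (approx_kappa Hg _ hs'). f_equal.
  transitivity (W_map initial_map_qe (W_map (sub_val_qe _) s')); [|rewrite hs'; reflexivity].
  apply W_map_compose. intros a. symmetry. apply initial_map_approx_at.
Qed.

Lemma initial_map_unique (g : Z -> Z') (hg : quasi_emb g) :
  (forall x, g (iota x) = iota' x) -> (forall s, g (kappa s) = kappa' (W_map hg s)) ->
  forall z, g z = initial_map z.
Proof.
  intros Hi Hk.
  enough (H : forall k z, h z < k -> g z = initial_map z) by (intros z; eauto).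
  induction k as [|k IH]; intros z hz; [lia|].
  destruct (surj z) as [[x <-]|[s <-]]; [rewrite Hi, initial_map_iota; reflexivity|].
  rewrite Hk, initial_map_kappa. f_equal. apply W_map_supp_ext.
  intros a ha. apply IH. pose proof (h_supp ha). lia.
Qed.

End Target.

Lemma initial_of_height : is_initial_KFP W X Z iota kappa.
Proof.
  intros Z' iota' kappa' HK'.
  exists (initial_map HK'), (@initial_map_qe Z' iota' kappa' HK').
  split; [|split].
  - apply initial_map_iota.
  - apply initial_map_kappa.
  - apply initial_map_unique.
Qed.

End InitialFromHeight.

(** * Initial Kruskal fixed points are generated *)

Section Generated.
Variables (W : PO_dilator) (X Z : PO) (iota : X -> Z) (kappa : W Z -> Z).
Hypothesis HK : is_KFP W X Z iota kappa.

Fixpoint generated_in (n : nat) (z : Z) : Prop :=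
  match n with
  | 0 => False
  | S m => (exists x, z = iota x) \/
           (exists s, z = kappa s /\ forall t, In t (supp s) -> generated_in m t)
  end.

Lemma generated_in_mono n m z : n <= m -> generated_in n z -> generated_in m z.
Proof.
  intros hnm. revert m hnm z. induction n as [|n IH]; intros [|m] hnm z; cbn; try tauto; [lia|].
  intros [H|[s [-> Hs]]]; [left; exact H|right; exists s; split; auto].
  intros t ht. apply (IH m); [lia|auto].
Qed.

Definition generated (z : Z) : Prop := exists n, generated_in n z.

Lemma generated_in_list (l : list Z) :
  (forall z, In z l -> generated z) -> exists n, forall z, In z l -> generated_in n z.
Proof. apply monotone_family_bound. intros n m z; apply generated_in_mono. Qed.

Definition gen_po : PO := sub_po generated.

Lemma generated_iota x : generated (iota x).
Proof. exists 1. left; eauto. Qed.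

Lemma generated_kappa (s : W gen_po) : generated (kappa (W_map (sub_val_qe generated) s)).
Proof.
  destruct (generated_in_list (l := supp (W_map (sub_val_qe generated) s))) as [N HN].
  { intros t ht. apply supp_nat in ht as [[z pz] [_ <-]]. exact pz. }
  exists (S N). right. eauto.
Qed.

Definition gen_iota (x : X) : gen_po := exist generated (iota x) (generated_iota x).
Definition gen_kappa (s : W gen_po) : gen_po := exist generated _ (generated_kappa s).

Lemma gen_po_KFP : is_KFP W X gen_po gen_iota gen_kappa.
Proof.
  split; [|split; [|split; [|split]]].
  - intros x s e. apply (f_equal (@proj1_sig _ _)) in e. exact (kfp_iota_neq_kappa HK e).
  - intros x y H. exact (kfp_iota_le_iota HK H).
  - intros x t. change (le (sub_val (gen_iota x)) (kappa (W_map (sub_val_qe generated) t)) <->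
                        fin_le [gen_iota x] (supp t)).
    rewrite <- (fin_le_single_W_map (sub_val_qe generated) (sub_val_emb generated)).
    apply (kfp_iota_le_kappa HK).
  - intros s y H. exact (kfp_kappa_nle_iota HK H).
  - intros s t. change (le (sub_val (gen_kappa s)) (kappa (W_map (sub_val_qe generated) t)) <->
                        le s t \/ fin_le [gen_kappa s] (supp t)).
    rewrite <- (fin_le_single_W_map (sub_val_qe generated) (sub_val_emb generated)).
    rewrite <- (W_map_emb (sub_val_qe generated) (sub_val_emb generated) s t).
    apply (kfp_kappa_le_kappa HK).
Qed.

Hypothesis HI : is_initial_KFP W X Z iota kappa.

Lemma initial_generated z : generated z.
Proof.
  destruct (HI gen_po_KFP) as [f [hf [Hi [Hk _]]]].
  assert (hg : quasi_emb (fun z => sub_val (f z))) by (intros a b H; apply hf, H).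
  rewrite <- (initial_endo_id HK HI (hg := hg)).
  - exact (proj2_sig (f z)).
  - intros x. cbn. rewrite Hi. reflexivity.
  - intros s. cbn. rewrite Hk. cbn. f_equal. symmetry. apply W_map_compose. reflexivity.
Qed.

Lemma initial_surj z : (exists x, iota x = z) \/ (exists s, kappa s = z).
Proof.
  destruct (initial_generated z) as [[|n] H]; [destruct H|].
  destruct H as [[x ->]|[s [-> _]]]; [left|right]; eauto.
Qed.

Hypothesis hW : normal W.

Lemma generated_in_not_in_own_supp n s : generated_in n (kappa s) -> ~ In (kappa s) (supp s).
Proof.
  revert s. induction n as [|n IH]; intros t ht hin; [destruct ht|].
  destruct ht as [[x e]|[s [e hs]]]; [exact (kfp_iota_neq_kappa HK (eq_sym e)) |].
  assert (hle : le (kappa t) (kappa s)) by (rewrite e; apply le_refl).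
  assert (hu : exists u, In u (supp s) /\ le (kappa t) u).
  { apply (kfp_kappa_le_kappa HK) in hle as [hle|hle];
      [exact (hW hle hin) | apply fin_le_single, hle]. }
  destruct hu as [u [hu htu]].
  replace u with (kappa s) in hu.
  2: { apply le_antisym; [rewrite <- e; exact htu | exact (kfp_supp_le_kappa HK initial_surj hu)]. }
  exact (IH s (hs _ hu) hu).
Qed.

Lemma initial_kappa_inj s t : kappa s = kappa t -> s = t.
Proof.
  apply (kfp_kappa_inj HK initial_surj). intros u.
  destruct (initial_generated (kappa u)) as [n hn].
  exact (generated_in_not_in_own_supp hn).
Qed.

Lemma least_generation_exists z :
  exists n, generated_in n z /\ forall m, generated_in m z -> n <= m.
Proof.
  destruct (dec_inh_nat_subset_has_unique_least_element _
              (fun n => classic (generated_in n z)) (initial_generated z)) as [n [Hn _]].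
  exists n; exact Hn.
Qed.

Definition initial_height (z : Z) : nat :=
  proj1_sig (constructive_indefinite_description _ (least_generation_exists z)).

Lemma initial_height_spec z :
  generated_in (initial_height z) z /\ forall m, generated_in m z -> initial_height z <= m.
Proof. exact (proj2_sig (constructive_indefinite_description _ (least_generation_exists z))). Qed.

Lemma initial_height_supp z s : In z (supp s) -> initial_height z < initial_height (kappa s).
Proof.
  intros hz. destruct (initial_height_spec (kappa s)) as [hs _].
  destruct (initial_height (kappa s)) as [|m]; [destruct hs|].
  destruct hs as [[x e]|[t [e ht]]]; [destruct (kfp_iota_neq_kappa HK (eq_sym e))|].
  apply initial_kappa_inj in e. subst t.
  pose proof (proj2 (initial_height_spec z) m (ht z hz)). lia.
Qed.

End Generated.

(** * A Kruskal fixed point with monotone [iota] *)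

Section Stages.
Variables (W : PO_dilator) (X Z : PO) (iota : X -> Z) (kappa : W Z -> Z).
Hypothesis hW : normal W.
Hypothesis HK : is_KFP W X Z iota kappa.
Hypothesis kappa_inj : forall s t, kappa s = kappa t -> s = t.
Variable h : Z -> nat.
Hypothesis h_supp : forall (z : Z) (s : W Z), In z (supp s) -> h z < h (kappa s).

Record stage := Stage { stage_mem : Z -> Prop; stage_le : Z -> Z -> Prop }.

Record stage_order (s : stage) : Prop := {
  stage_refl : forall a, stage_mem s a -> stage_le s a a;
  stage_antisym : forall a b, stage_mem s a -> stage_mem s b ->
    stage_le s a b -> stage_le s b a -> a = b;
  stage_trans : forall a b c, stage_mem s a -> stage_mem s b -> stage_mem s c ->
    stage_le s a b -> stage_le s b c -> stage_le s a c;
  stage_le_of_le : forall a b, stage_mem s a -> stage_mem s b -> le a b -> stage_le s a b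
}.

(* When [s] is not a [stage_order], the order of [Z] is used instead, so that
   [stage_po s] is a partial order for every [s]. *)
Definition stage_po (s : stage) : PO.
Proof.
  refine (@MkPO (sig (stage_mem s))
    (fun a b => (stage_order s /\ stage_le s (proj1_sig a) (proj1_sig b)) \/
                (~ stage_order s /\ le (proj1_sig a) (proj1_sig b))) _ _ _).
  - intros [a pa]. destruct (classic (stage_order s)) as [Ho|Ho].
    + left; split; [exact Ho | exact (stage_refl Ho pa)].
    + right; split; [exact Ho | apply le_refl].
  - intros [a pa] [b pb] hab hba; cbn in *.
    assert (a = b).
    { destruct hab as [[Ho hab]|[Ho hab]]; destruct hba as [[Ho' hba]|[Ho' hba]]; try contradiction.
      - exact (stage_antisym Ho pa pb hab hba).
      - apply le_antisym; assumption. }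
    subst; f_equal; apply proof_irrelevance.
  - intros [a pa] [b pb] [c pc] hab hbc; cbn in *.
    destruct hab as [[Ho hab]|[Ho hab]]; destruct hbc as [[Ho' hbc]|[Ho' hbc]]; try contradiction.
    + left; split; [exact Ho | exact (stage_trans Ho pa pb pc hab hbc)].
    + right; split; [exact Ho | eapply le_trans; eassumption].
Defined.

Definition stage_val (s : stage) (a : stage_po s) : Z := proj1_sig a.

Lemma stage_val_mem s (a : stage_po s) : stage_mem s (stage_val a).
Proof. exact (proj2_sig a). Qed.

Lemma stage_val_qe s : quasi_emb (@stage_val s).
Proof.
  intros a b H. destruct (classic (stage_order s)) as [Ho|Ho].
  - left; split; [exact Ho | exact (stage_le_of_le Ho (stage_val_mem a) (stage_val_mem b) H)].
  - right; split; [exact Ho | exact H].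
Qed.

Lemma stage_po_le s : stage_order s ->
  forall a b : stage_po s, le a b <-> stage_le s (stage_val a) (stage_val b).
Proof.
  intros Ho a b. split.
  - intros [[_ H]|[Ho' _]]; [exact H | contradiction].
  - intros H; left; split; assumption.
Qed.

Definition stage_kappa s (sg : W (stage_po s)) : Z := kappa (W_map (@stage_val_qe s) sg).

Lemma stage_kappa_inj s (sg tg : W (stage_po s)) : stage_kappa sg = stage_kappa tg -> sg = tg.
Proof. intros e. apply kappa_inj, W_map_inj in e. exact e. Qed.

Lemma iota_neq_stage_kappa s x (sg : W (stage_po s)) : iota x <> stage_kappa sg.
Proof. apply (kfp_iota_neq_kappa HK). Qed.

Definition next_mem (s : stage) (z : Z) : Prop :=
  (exists x, z = iota x) \/ (exists sg : W (stage_po s), z = stage_kappa sg).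

(* The order clauses of a Kruskal fixed point, with [iota] made monotone and comparisons
   against support elements taken in stage [s]. *)
Definition next_le (s : stage) (a b : Z) : Prop :=
  next_mem s a /\ next_mem s b /\
  ((exists x y, a = iota x /\ b = iota y /\ le x y) \/
   (exists sg tg : W (stage_po s), a = stage_kappa sg /\ b = stage_kappa tg /\ le sg tg) \/
   (exists tg : W (stage_po s), b = stage_kappa tg /\
      exists t, In t (supp tg) /\ stage_le s a (stage_val t))).

Definition next_stage (s : stage) : stage := Stage (next_mem s) (next_le s).

Fixpoint approx_stage (n : nat) : stage :=
  match n with
  | 0 => Stage (fun _ => False) (fun _ _ => False)
  | S m => next_stage (approx_stage m)
  end.

Lemma next_mem_iota s x : next_mem s (iota x).
Proof. left; eauto. Qed.

Lemma next_mem_kappa s (sg : W (stage_po s)) : next_mem s (stage_kappa sg).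
Proof. right; eauto. Qed.

Lemma next_le_mem s a b : next_le s a b -> next_mem s a /\ next_mem s b.
Proof. intros [Pa [Pb _]]; split; assumption. Qed.

Lemma next_le_iota_iota s x y : next_le s (iota x) (iota y) <-> le x y.
Proof.
  split.
  - intros [_ [_ [[x' [y' [ex [ey H]]]]|[[sg [tg [e _]]]|[tg [e _]]]]]].
    + apply (kfp_iota_inj HK) in ex, ey. subst; exact H.
    + destruct (iota_neq_stage_kappa e).
    + destruct (iota_neq_stage_kappa e).
  - intros H. split; [apply next_mem_iota | split; [apply next_mem_iota|]]. left; eauto.
Qed.

Lemma next_le_iota_inv s a y : next_le s a (iota y) -> exists x, a = iota x.
Proof.
  intros [_ [_ [[x [y' [e _]]]|[[sg [tg [_ [e _]]]]|[tg [e _]]]]]]; [eauto| |];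
    destruct (iota_neq_stage_kappa e).
Qed.

Lemma next_le_iota_kappa s x (tg : W (stage_po s)) :
  next_le s (iota x) (stage_kappa tg) <->
  exists t, In t (supp tg) /\ stage_le s (iota x) (stage_val t).
Proof.
  split.
  - intros [_ [_ [[x' [y' [_ [e _]]]]|[[sg [tg' [e _]]]|[tg' [e H]]]]]].
    + destruct (iota_neq_stage_kappa (eq_sym e)).
    + destruct (iota_neq_stage_kappa e).
    + apply stage_kappa_inj in e. subst; exact H.
  - intros H. split; [apply next_mem_iota | split; [apply next_mem_kappa|]]. right; right; eauto.
Qed.

Lemma next_le_kappa_kappa s (sg tg : W (stage_po s)) :
  next_le s (stage_kappa sg) (stage_kappa tg) <->
  le sg tg \/ exists t, In t (supp tg) /\ stage_le s (stage_kappa sg) (stage_val t).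
Proof.
  split.
  - intros [_ [_ [[x' [y' [e _]]]|[[sg' [tg' [e1 [e2 H]]]]|[tg' [e H]]]]]].
    + destruct (iota_neq_stage_kappa (eq_sym e)).
    + apply stage_kappa_inj in e1, e2. subst; left; exact H.
    + apply stage_kappa_inj in e. subst; right; exact H.
  - intros H. split; [apply next_mem_kappa | split; [apply next_mem_kappa|]].
    destruct H as [H|H]; right; [left|right]; eauto.
Qed.

Record stage_inv (s : stage) : Prop := {
  inv_order : stage_order s;
  inv_mem_next : forall z, stage_mem s z -> next_mem s z;
  inv_le_next : forall a b, stage_mem s a -> stage_mem s b -> (next_le s a b <-> stage_le s a b);
  inv_down_next : forall a b, next_le s a b -> stage_mem s b -> stage_mem s a;
  inv_down_le : forall a b, next_mem s a -> le a b -> stage_mem s b -> stage_mem s a;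
  inv_le_mem : forall a b, stage_le s a b -> stage_mem s a /\ stage_mem s b;
  inv_mem_iota : forall z x, stage_mem s z -> stage_mem s (iota x);
  inv_le_iota : forall x y, stage_mem s (iota x) -> stage_mem s (iota y) -> le x y ->
    stage_le s (iota x) (iota y)
}.

Lemma stage_normal s (Ho : stage_order s) (sg tg : W (stage_po s)) u :
  le sg tg -> In u (supp sg) ->
  exists t, In t (supp tg) /\ stage_le s (stage_val u) (stage_val t).
Proof.
  intros H hu. destruct (hW H hu) as [t [ht hut]].
  exists t; split; [exact ht | apply (stage_po_le Ho), hut].
Qed.

Section NextStage.
Variable s : stage.
Hypothesis Hs : stage_inv s.
Let Ho := inv_order Hs.

Lemma stage_le_next a b : stage_le s a b -> next_le s a b.
Proof. intros H. destruct (inv_le_mem Hs H). apply (inv_le_next Hs); assumption. Qed.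

Lemma stage_le_supp (tg : W (stage_po s)) t : In t (supp tg) ->
  stage_mem s (stage_kappa tg) -> stage_le s (stage_val t) (stage_kappa tg).
Proof.
  intros ht Pt. apply (inv_le_next Hs); [apply stage_val_mem | exact Pt |].
  split; [apply (inv_mem_next Hs), stage_val_mem | split; [apply next_mem_kappa|]].
  right; right. exists tg; split; [reflexivity|].
  exists t; split; [exact ht | apply (stage_refl Ho), stage_val_mem].
Qed.

Lemma next_le_refl a : next_mem s a -> next_le s a a.
Proof.
  intros [[x ->]|[sg ->]].
  - apply next_le_iota_iota, le_refl.
  - apply next_le_kappa_kappa. left; apply le_refl.
Qed.

Lemma next_le_antisym a b : next_mem s a -> next_mem s b ->
  next_le s a b -> next_le s b a -> a = b.
Proof.
  assert (Hmem : forall a b, next_le s a b -> next_le s b a -> stage_mem s a -> a = b).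
  { intros a' b' hab hba Pa. pose proof (inv_down_next Hs hba Pa) as Pb.
    apply (stage_antisym Ho Pa Pb); apply (inv_le_next Hs); assumption. }
  intros Pa Pb hab hba.
  destruct Pa as [[x ->]|[sg ->]]; destruct Pb as [[y ->]|[tg ->]].
  - apply next_le_iota_iota in hab, hba. f_equal; apply le_antisym; assumption.
  - destruct (next_le_iota_inv hba) as [x' e]. destruct (iota_neq_stage_kappa (eq_sym e)).
  - destruct (next_le_iota_inv hab) as [x' e]. destruct (iota_neq_stage_kappa (eq_sym e)).
  - pose proof hab as hab'; pose proof hba as hba'.
    apply next_le_kappa_kappa in hab as [hab|[t [_ hst]]].
    + apply next_le_kappa_kappa in hba as [hba|[t [_ hts]]].
      * f_equal; apply le_antisym; assumption.
      * symmetry; apply Hmem; [assumption | assumption | exact (proj1 (inv_le_mem Hs hts))].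
    + apply Hmem; [assumption | assumption | exact (proj1 (inv_le_mem Hs hst))].
Qed.

Lemma stage_le_supp_trans a (rg tg : W (stage_po s)) u : In u (supp rg) ->
  stage_le s a (stage_val u) -> next_le s (stage_kappa rg) (stage_kappa tg) ->
  exists t, In t (supp tg) /\ stage_le s a (stage_val t).
Proof.
  intros hu hau hrt. destruct (inv_le_mem Hs hau) as [Pa Pu].
  apply next_le_kappa_kappa in hrt as [hrt|[t [ht hrt]]].
  - destruct (stage_normal Ho hrt hu) as [t [ht hut]]. exists t; split; [exact ht|].
    exact (stage_trans Ho Pa Pu (stage_val_mem t) hau hut).
  - exists t; split; [exact ht|].
    destruct (inv_le_mem Hs hrt) as [Pr Pt].
    apply (stage_trans Ho Pa Pr Pt); [|exact hrt].
    exact (stage_trans Ho Pa Pu Pr hau (stage_le_supp hu Pr)).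
Qed.

Lemma next_le_trans a b c : next_mem s a -> next_mem s b -> next_mem s c ->
  next_le s a b -> next_le s b c -> next_le s a c.
Proof.
  intros Pa Pb Pc hab hbc.
  destruct Pb as [[y ->]|[rg ->]].
  - destruct (next_le_iota_inv hab) as [x ->]. apply next_le_iota_iota in hab.
    destruct Pc as [[z ->]|[tg ->]].
    + apply next_le_iota_iota in hbc. apply next_le_iota_iota. eapply le_trans; eassumption.
    + apply next_le_iota_kappa in hbc as [t [ht hyt]].
      apply next_le_iota_kappa. exists t; split; [exact ht|].
      destruct (inv_le_mem Hs hyt) as [Py Pt]. pose proof (inv_mem_iota Hs x Py) as Px.
      exact (stage_trans Ho Px Py Pt (inv_le_iota Hs Px Py hab) hyt).
  - destruct Pc as [[z ->]|[tg ->]].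
    { destruct (next_le_iota_inv hbc) as [x' e]. destruct (iota_neq_stage_kappa (eq_sym e)). }
    destruct Pa as [[x ->]|[sg ->]].
    + apply next_le_iota_kappa in hab as [u [hu hxu]].
      apply next_le_iota_kappa. exact (stage_le_supp_trans hu hxu hbc).
    + pose proof hab as hab'.
      apply next_le_kappa_kappa in hab as [hab|[u [hu hsu]]]; apply next_le_kappa_kappa.
      * apply next_le_kappa_kappa in hbc as [hbc|[t [ht hrt]]].
        -- left; eapply le_trans; eassumption.
        -- right. exists t; split; [exact ht|].
           destruct (inv_le_mem Hs hrt) as [Pr Pt]. pose proof (inv_down_next Hs hab' Pr) as Ps.
           apply (stage_trans Ho Ps Pr Pt); [apply (inv_le_next Hs Ps Pr), hab' | exact hrt].
      * right. exact (stage_le_supp_trans hu hsu hbc).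
Qed.

Lemma next_le_of_le a b : next_mem s a -> next_mem s b -> le a b -> next_le s a b.
Proof.
  intros Pa Pb hab.
  destruct Pa as [[x ->]|[sg ->]]; destruct Pb as [[y ->]|[tg ->]].
  - apply next_le_iota_iota, (kfp_iota_le_iota HK hab).
  - apply (kfp_iota_le_kappa HK), fin_le_single in hab as [u [hu hxu]].
    apply supp_nat in hu as [t [ht <-]].
    apply next_le_iota_kappa. exists t; split; [exact ht|].
    pose proof (stage_val_mem t) as Pt.
    exact (stage_le_of_le Ho (inv_mem_iota Hs x Pt) Pt hxu).
  - destruct (kfp_kappa_nle_iota HK hab).
  - apply next_le_kappa_kappa.
    apply (kfp_kappa_le_kappa HK) in hab as [hab|hab]; [left; exact (W_map_qe hab)|right].
    apply fin_le_single in hab as [u [hu hsu]]. apply supp_nat in hu as [t [ht <-]].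
    exists t; split; [exact ht|].
    pose proof (stage_val_mem t) as Pt.
    exact (stage_le_of_le Ho (inv_down_le Hs (next_mem_kappa sg) hsu Pt) Pt hsu).
Qed.

Lemma next_stage_order : stage_order (next_stage s).
Proof.
  split; cbn.
  - exact next_le_refl.
  - exact next_le_antisym.
  - exact next_le_trans.
  - exact next_le_of_le.
Qed.

Definition stage_incl (a : stage_po s) : stage_po (next_stage s) :=
  exist (next_mem s) (stage_val a) (inv_mem_next Hs (stage_val_mem a)).

Lemma stage_incl_emb : embedding stage_incl.
Proof.
  intros a b. rewrite (stage_po_le next_stage_order), (stage_po_le Ho).
  apply (inv_le_next Hs); apply stage_val_mem.
Qed.

Definition stage_incl_qe : quasi_emb stage_incl := embedding_quasi_emb stage_incl_emb.

Lemma stage_kappa_incl (sg : W (stage_po s)) :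
  stage_kappa (W_map stage_incl_qe sg) = stage_kappa sg.
Proof. unfold stage_kappa. f_equal. symmetry. apply W_map_compose. reflexivity. Qed.

Lemma next_preimage (sg' : W (stage_po (next_stage s))) :
  (forall a, In a (supp sg') -> stage_mem s (stage_val a)) ->
  exists sg, sg' = W_map stage_incl_qe sg.
Proof.
  intros H. destruct (proj2 (supp_rng stage_incl_qe stage_incl_emb sg')) as [sg e].
  - intros [a pa] ha. exists (exist _ a (H _ ha)).
    unfold stage_incl; cbn. f_equal. apply proof_irrelevance.
  - exists sg; symmetry; exact e.
Qed.

Lemma next_le_supp_incl a (tg : W (stage_po s)) :
  (exists t', In t' (supp (W_map stage_incl_qe tg)) /\ next_le s a (stage_val t')) <->
  (exists t, In t (supp tg) /\ stage_le s a (stage_val t)).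
Proof.
  split.
  - intros [t' [ht' hat]]. apply supp_nat in ht' as [t [ht <-]].
    exists t; split; [exact ht|].
    apply (inv_le_next Hs); [| apply stage_val_mem | exact hat].
    exact (inv_down_next Hs hat (stage_val_mem t)).
  - intros [t [ht hat]]. exists (stage_incl t).
    split; [apply in_supp_W_map, ht | apply stage_le_next, hat].
Qed.

Lemma next_next_le a b : next_mem s a -> next_mem s b ->
  (next_le (next_stage s) a b <-> next_le s a b).
Proof.
  intros [[x ->]|[sg ->]] [[y ->]|[tg ->]].
  - rewrite !next_le_iota_iota. reflexivity.
  - rewrite <- (stage_kappa_incl tg) at 1. rewrite !next_le_iota_kappa. apply next_le_supp_incl.
  - split; intros H; apply next_le_iota_inv in H as [x e];
      [rewrite <- stage_kappa_incl in e|]; destruct (iota_neq_stage_kappa (eq_sym e)).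
  - rewrite <- (stage_kappa_incl tg) at 1. rewrite <- (stage_kappa_incl sg) at 1.
    rewrite !next_le_kappa_kappa, (stage_kappa_incl sg).
    rewrite (W_map_emb stage_incl_qe stage_incl_emb sg tg). cbn [stage_le next_stage].
    rewrite next_le_supp_incl. reflexivity.
Qed.

Lemma next_down_next a b : next_le (next_stage s) a b -> next_mem s b -> next_mem s a.
Proof.
  intros H Pb. destruct (next_le_mem H) as [Pa _].
  destruct Pa as [[x ->]|[sg' ->]]; [apply next_mem_iota|].
  destruct Pb as [[y ->]|[tg ->]].
  { destruct (next_le_iota_inv H) as [x e]. destruct (iota_neq_stage_kappa (eq_sym e)). }
  rewrite <- (stage_kappa_incl tg) in H. apply next_le_kappa_kappa in H as [H|[t [_ hst]]].
  - destruct (next_preimage (sg' := sg')) as [sg ->].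
    + intros c hc. destruct (stage_normal next_stage_order H hc) as [t' [ht' hct]].
      apply supp_nat in ht' as [t [_ <-]].
      exact (inv_down_next Hs hct (stage_val_mem t)).
    + rewrite stage_kappa_incl. apply next_mem_kappa.
  - exact (proj1 (next_le_mem hst)).
Qed.

Lemma next_down_le : forall a b,
  next_mem (next_stage s) a -> le a b -> next_mem s b -> next_mem s a.
Proof.
  enough (H : forall k a b, h b < k ->
            next_mem (next_stage s) a -> le a b -> next_mem s b -> next_mem s a)
    by (intros a b; eauto).
  induction k as [|k IH]; intros a b hk Pa hab Pb; [lia|].
  destruct Pa as [[x ->]|[sg' ->]]; [apply next_mem_iota|].
  destruct Pb as [[y ->]|[tg ->]]; [destruct (kfp_kappa_nle_iota HK hab)|].
  unfold stage_kappa in hab, hk. apply (kfp_kappa_le_kappa HK) in hab as [hab|hab].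
  - destruct (next_preimage (sg' := sg')) as [sg ->].
    + intros c hc.
      destruct (hW hab (in_supp_W_map (@stage_val_qe _) hc)) as [u [hu hcu]].
      apply supp_nat in hu as [t [_ <-]].
      exact (inv_down_le Hs (stage_val_mem c) hcu (stage_val_mem t)).
    + rewrite stage_kappa_incl. apply next_mem_kappa.
  - apply fin_le_single in hab as [u [hu hsu]].
    pose proof (h_supp hu) as hu'. apply supp_nat in hu as [t [_ <-]].
    apply (IH _ (stage_val t)); [lia | apply next_mem_kappa | exact hsu |].
    apply (inv_mem_next Hs), stage_val_mem.
Qed.

Lemma next_stage_inv : stage_inv (next_stage s).
Proof.
  split; cbn.
  - exact next_stage_order.
  - intros z [[x ->]|[sg ->]]; [apply next_mem_iota|].
    rewrite <- stage_kappa_incl. apply next_mem_kappa.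
  - exact next_next_le.
  - exact next_down_next.
  - exact next_down_le.
  - exact (@next_le_mem s).
  - intros z x _. apply next_mem_iota.
  - intros x y _ _ hxy. apply next_le_iota_iota, hxy.
Qed.

End NextStage.

Lemma approx_stage_inv n : stage_inv (approx_stage n).
Proof.
  induction n as [|n IH]; [|exact (next_stage_inv IH)].
  constructor; cbn; try tauto. constructor; cbn; tauto.
Qed.

Lemma approx_mem_mono n m z : n <= m ->
  stage_mem (approx_stage n) z -> stage_mem (approx_stage m) z.
Proof.
  intros hnm; induction hnm as [|m hnm IH]; [tauto|].
  intros H. apply (inv_mem_next (approx_stage_inv m)), IH, H.
Qed.

Lemma approx_le_stable n m a b : n <= m ->
  stage_mem (approx_stage n) a -> stage_mem (approx_stage n) b ->
  (stage_le (approx_stage m) a b <-> stage_le (approx_stage n) a b).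
Proof.
  intros hnm Pa Pb; induction hnm as [|m hnm IH]; [reflexivity|].
  rewrite <- IH. apply (inv_le_next (approx_stage_inv m)); apply (approx_mem_mono hnm); assumption.
Qed.

Lemma approx_le_mono n m a b : n <= m ->
  stage_le (approx_stage n) a b -> stage_le (approx_stage m) a b.
Proof.
  intros hnm H. destruct (inv_le_mem (approx_stage_inv n) H) as [Pa Pb].
  apply (approx_le_stable hnm Pa Pb), H.
Qed.

Definition limit_mem (z : Z) : Prop := exists n, stage_mem (approx_stage n) z.
Definition limit_le (a b : Z) : Prop := exists n, stage_le (approx_stage n) a b.

Lemma limit_le_iff n a b : stage_mem (approx_stage n) a -> stage_mem (approx_stage n) b ->
  (limit_le a b <-> stage_le (approx_stage n) a b).
Proof.
  intros Pa Pb. split; [|intros H; exists n; exact H].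
  intros [m H]. apply (approx_le_mono (Nat.le_max_r n m)) in H.
  apply (approx_le_stable (Nat.le_max_l n m) Pa Pb), H.
Qed.

Lemma limit_mem_bound (l : list Z) : (forall z, In z l -> limit_mem z) ->
  exists n, forall z, In z l -> stage_mem (approx_stage n) z.
Proof. apply monotone_family_bound. intros n m z; apply approx_mem_mono. Qed.

Definition limit_po : PO.
Proof.
  refine (@MkPO (sig limit_mem) (fun a b => limit_le (proj1_sig a) (proj1_sig b)) _ _ _).
  - intros [a [n Pa]]. exists n. exact (stage_refl (inv_order (approx_stage_inv n)) Pa).
  - intros [a pa] [b pb] [n hab] [m hba]; cbn in *.
    apply (approx_le_mono (Nat.le_max_l n m)) in hab.
    apply (approx_le_mono (Nat.le_max_r n m)) in hba.
    destruct (inv_le_mem (approx_stage_inv _) hab) as [Pa Pb].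
    assert (a = b) by exact (stage_antisym (inv_order (approx_stage_inv _)) Pa Pb hab hba).
    subst; f_equal; apply proof_irrelevance.
  - intros [a pa] [b pb] [c pc] [n hab] [m hbc]; cbn in *. exists (max n m).
    apply (approx_le_mono (Nat.le_max_l n m)) in hab.
    apply (approx_le_mono (Nat.le_max_r n m)) in hbc.
    destruct (inv_le_mem (approx_stage_inv _) hab) as [Pa Pb].
    destruct (inv_le_mem (approx_stage_inv _) hbc) as [_ Pc].
    exact (stage_trans (inv_order (approx_stage_inv _)) Pa Pb Pc hab hbc).
Defined.

Definition limit_val (a : limit_po) : Z := proj1_sig a.

Lemma limit_po_le (a b : limit_po) : le a b <-> limit_le (limit_val a) (limit_val b).
Proof. reflexivity. Qed.

Lemma limit_val_qe : quasi_emb limit_val.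
Proof.
  intros [a [n Pa]] [b [m Pb]] H; cbn in *. exists (max n m).
  apply (stage_le_of_le (inv_order (approx_stage_inv _))); [| |exact H];
    eapply approx_mem_mono; [apply Nat.le_max_l | exact Pa | apply Nat.le_max_r | exact Pb].
Qed.

Definition approx_to_limit n (a : stage_po (approx_stage n)) : limit_po :=
  exist limit_mem (stage_val a) (ex_intro _ n (stage_val_mem a)).
Arguments approx_to_limit : clear implicits.

Lemma approx_to_limit_emb n : embedding (approx_to_limit n).
Proof.
  intros a b. rewrite (stage_po_le (inv_order (approx_stage_inv n))).
  apply limit_le_iff; apply stage_val_mem.
Qed.
Arguments approx_to_limit_emb : clear implicits.

Definition approx_to_limit_qe n : quasi_emb (approx_to_limit n) :=
  embedding_quasi_emb (approx_to_limit_emb n).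
Arguments approx_to_limit_qe : clear implicits.

Lemma limit_preimage (sgs : list (W limit_po)) :
  exists N, forall sg, In sg sgs -> exists sg0, sg = W_map (approx_to_limit_qe N) sg0.
Proof.
  destruct (limit_mem_bound (l := flat_map (fun sg => map limit_val (supp sg)) sgs)) as [N HN].
  { intros z hz. apply in_flat_map in hz as [sg [_ hz]].
    apply in_map_iff in hz as [[a pa] [<- _]]. exact pa. }
  exists N. intros sg hsg.
  destruct (proj2 (supp_rng (approx_to_limit_qe N) (approx_to_limit_emb N) sg)) as [sg0 e].
  - intros [a pa] ha.
    assert (Pa : stage_mem (approx_stage N) a).
    { apply HN, in_flat_map. exists sg; split; [exact hsg|]. exact (in_map limit_val _ _ ha). }
    exists (exist _ a Pa). unfold approx_to_limit; cbn. f_equal. apply proof_irrelevance.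
  - exists sg0; symmetry; exact e.
Qed.

Lemma limit_mem_kappa (sg : W limit_po) : limit_mem (kappa (W_map limit_val_qe sg)).
Proof.
  destruct (limit_preimage [sg]) as [N HN]. destruct (HN sg (or_introl eq_refl)) as [sg0 ->].
  exists (S N). rewrite <- (W_map_compose (approx_to_limit_qe N) limit_val_qe (@stage_val_qe _))
    by reflexivity.
  apply next_mem_kappa.
Qed.

Definition limit_iota (x : X) : limit_po :=
  exist limit_mem (iota x) (ex_intro _ 1 (next_mem_iota _ x)).
Definition limit_kappa (sg : W limit_po) : limit_po := exist limit_mem _ (limit_mem_kappa sg).

Lemma limit_val_kappa N (sg0 : W (stage_po (approx_stage N))) :
  limit_val (limit_kappa (W_map (approx_to_limit_qe N) sg0)) = stage_kappa sg0.
Proof. unfold stage_kappa; cbn. f_equal. symmetry. apply W_map_compose. reflexivity. Qed.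

Lemma limit_iota_le_kappa x t :
  le (limit_iota x) (limit_kappa t) <-> fin_le [limit_iota x] (supp t).
Proof.
  destruct (limit_preimage [t]) as [N HN]. destruct (HN t (or_introl eq_refl)) as [t0 ->].
  rewrite limit_po_le, limit_val_kappa, fin_le_single.
  rewrite (limit_le_iff (n := S N)) by (apply next_mem_iota || apply next_mem_kappa).
  cbn [approx_stage next_stage stage_le limit_val limit_iota proj1_sig].
  rewrite next_le_iota_kappa. split.
  - intros [u [hu hxu]]. exists (approx_to_limit N u).
    split; [apply in_supp_W_map, hu | exists N; exact hxu].
  - intros [y [hy hxy]]. apply supp_nat in hy as [u [hu <-]]. exists u; split; [exact hu|].
    pose proof (stage_val_mem u) as Pu.
    apply (limit_le_iff (inv_mem_iota (approx_stage_inv N) x Pu) Pu), hxy.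
Qed.

Lemma limit_kappa_le_kappa s t :
  le (limit_kappa s) (limit_kappa t) <-> le s t \/ fin_le [limit_kappa s] (supp t).
Proof.
  destruct (limit_preimage [s; t]) as [N HN].
  destruct (HN s (or_introl eq_refl)) as [s0 ->].
  destruct (HN t (or_intror (or_introl eq_refl))) as [t0 ->].
  rewrite limit_po_le, !limit_val_kappa, fin_le_single.
  rewrite (W_map_emb (approx_to_limit_qe N) (approx_to_limit_emb N) s0 t0).
  rewrite (limit_le_iff (n := S N)) by apply next_mem_kappa.
  cbn [approx_stage next_stage stage_le]. rewrite next_le_kappa_kappa.
  apply or_iff_compat_l. split.
  - intros [u [hu hsu]]. exists (approx_to_limit N u). split; [apply in_supp_W_map, hu|].
    rewrite limit_po_le, limit_val_kappa. exists N; exact hsu.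
  - intros [y [hy hsy]]. apply supp_nat in hy as [u [hu <-]]. exists u; split; [exact hu|].
    rewrite limit_po_le, limit_val_kappa in hsy.
    pose proof (stage_val_mem u) as Pu.
    assert (Ps : stage_mem (approx_stage N) (stage_kappa s0)).
    { apply (limit_le_iff (n := S N)) in hsy;
        [|apply next_mem_kappa | apply (inv_mem_next (approx_stage_inv N)), Pu].
      exact (inv_down_next (approx_stage_inv N) hsy Pu). }
    apply (limit_le_iff Ps Pu), hsy.
Qed.

Lemma limit_KFP : is_KFP W X limit_po limit_iota limit_kappa.
Proof.
  split; [|split; [|split; [|split]]].
  - intros x s e. apply (f_equal limit_val) in e. exact (kfp_iota_neq_kappa HK e).
  - intros x y [[|n] H]; [destruct H|]. apply next_le_iota_iota in H; exact H.
  - exact limit_iota_le_kappa.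
  - intros s y [[|n] H]; [destruct H|]. destruct (next_le_iota_inv H) as [x e].
    exact (kfp_iota_neq_kappa HK (eq_sym e)).
  - exact limit_kappa_le_kappa.
Qed.

Lemma limit_iota_mono x y : le x y -> le (limit_iota x) (limit_iota y).
Proof. intros H. exists 1. apply next_le_iota_iota, H. Qed.

Lemma monotone_KFP_exists : exists (Z' : PO) (iota' : X -> Z') (kappa' : W Z' -> Z'),
  is_KFP W X Z' iota' kappa' /\ forall x y, le x y -> le (iota' x) (iota' y).
Proof.
  exists limit_po, limit_iota, limit_kappa.
  split; [exact limit_KFP | exact limit_iota_mono].
Qed.

End Stages.

Theorem theorem3p5 (W : PO_dilator) (hW : normal W) (X Z : PO)
  (iota : X -> Z) (kappa : W Z -> Z) :
  is_KFP W X Z iota kappa ->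
  ( ( (forall z : Z, (exists x, iota x = z) \/ (exists s, kappa s = z)) /\
      (forall x y : X, le x y -> le (iota x) (iota y)) /\
      (exists h : Z -> nat, forall (s : Z) (sg : W Z),
          In s (supp sg) -> h s < h (kappa sg)) )
    <-> is_initial_KFP W X Z iota kappa ).
Proof.
  intros HK. split.
  - intros [surj [mono [h h_supp]]]. exact (initial_of_height HK surj mono h_supp).
  - intros HI.
    pose proof (initial_kappa_inj HK HI hW) as kappa_inj.
    pose proof (initial_height_supp HK HI hW) as h_supp.
    destruct (monotone_KFP_exists hW HK kappa_inj h_supp) as [Z' [iota' [kappa' [HK' mono']]]].
    split; [exact (initial_surj HK HI)|].
    split; [exact (initial_iota_mono HI HK' mono') | eexists; exact h_supp].
Qed.
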